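(* Let $A$ be a finitely generated associative $\mathbb{C}$-algebra. The product $a\star b:=\frac12(ab+ba)$ is associative on $A_\star:=(A/M_3(A),\star)$, and for every $k\ge1$ the action $a\star n:=\frac12(an+na)$, for $a\in A_\star$, $n\in N_k(A)$, is well-defined and makes $N_k(A)$ into an $A_\star$-module.
   Context: For an associative algebra $A$: $L_1=A$, $L_k=[A,L_{k-1}]$, $M_k=AL_kA$ (two-sided ideal generated by $L_k$), $N_k=M_k/M_{k+1}$. *)

From mathcomp Require Import all_boot all_algebra.
From mathcomp.real_closed Require Import complex.
From mathcomp Require Import Rstruct.
Set Implicit Arguments.
Unset Strict Implicit.
Unset Printing Implicit Defensive.
Import GRing.Theory.
Local Open Scope ring_scope.

Definition CC : fieldType := complex Rdefinitions.R.

Section LCS.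
Variable A : algType CC.

Definition fin_gen_alg : Prop :=
  exists gens : seq A,
    forall S : A -> Prop,
      S 1 ->
      (forall x y, S x -> S y -> S (x + y)) ->
      (forall (c : CC) x, S x -> S (c *: x)) ->
      (forall x y, S x -> S y -> S (x * y)) ->
      (forall g, g \in gens -> S g) ->
      forall x, S x.

Definition span (S : A -> Prop) : A -> Prop :=
  fun x => exists s : seq (CC * A),
    (forall p, p \in s -> S p.2) /\ x = \sum_(p <- s) p.1 *: p.2.

Definition commA (X : A -> Prop) : A -> Prop :=
  span (fun y => exists a x, X x /\ y = a * x - x * a).

(* Lower central series: lcs k = L_k, with L_1 = A, L_k = [A, L_{k-1}].
   (lcs 0 is set to A as well; it is never used.) *)
Fixpoint lcs (k : nat) : A -> Prop :=
  match k with
  | 0 => fun _ => True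
  | k'.+1 => if k' is 0 then fun _ => True else commA (lcs k')
  end.

Definition Mk (k : nat) : A -> Prop :=
  span (fun y => exists a l b, lcs k l /\ y = a * l * b).

Definition jprod (a b : A) : A := (2%:R : CC)^-1 *: (a * b + b * a).

End LCS.

(* Everything is governed by the identity (a * b) * c - a * (b * c) = 1/4 [b, [a, c]]
   for the Jordan product, which reduces the statement to two facts about the ideals
   M_k: [b, [a, M_k]] is contained in M_(k+1), and so are M_3 M_k and M_k M_3.  Both
   rest on L_3 L_k being contained in M_(k+1), proved by induction on k: for
   g = [y, [z, w]] and x in L_(k-1), the Leibniz rule gives
   g [a, x] = [[y, [z, w] a], x] - [[z, w] [y, a], x] - [g, x] a,
   and every double commutator [[u, v], x] lies in L_(k+1) by the Jacobi identity. *)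

From mathcomp Require Import all_boot all_algebra.
From mathcomp.real_closed Require Import complex.
From mathcomp Require Import Rstruct.
Set Implicit Arguments.
Unset Strict Implicit.
Unset Printing Implicit Defensive.
Import GRing.Theory Num.Theory.
Local Open Scope ring_scope.

Section Bracket.
Variable R : ringType.
Implicit Types x y z u v : R.

Definition lie x y := x * y - y * x.

Lemma lieDl x y z : lie (x + y) z = lie x z + lie y z.
Proof. by rewrite /lie mulrDl mulrDr opprD addrACA. Qed.

Lemma lieDr x y z : lie x (y + z) = lie x y + lie x z.
Proof. by rewrite /lie mulrDl mulrDr opprD addrACA. Qed.

Lemma lie_mull x y z : lie (x * y) z = x * lie y z + lie x z * y.
Proof. by rewrite /lie mulrBl mulrBr !mulrA addrA subrK. Qed.

Lemma lie_mulr x y z : lie x (y * z) = lie x y * z + y * lie x z.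
Proof. by rewrite /lie mulrBl mulrBr !mulrA addrA subrK. Qed.

Lemma mulr_lie x y : x * y = y * x + lie x y.
Proof. by rewrite /lie addrC subrK. Qed.

Lemma jacobi x y z : lie (lie x y) z = lie x (lie y z) - lie y (lie x z).
Proof.
rewrite /lie !(mulrBl, mulrBr) !mulrA !opprB.
rewrite [RHS]addrACA !subrKA [LHS]addrACA [RHS]addrACA; congr (_ + _); exact: addrC.
Qed.

End Bracket.

Lemma lie_linear (K : pzRingType) (R : algType K) (x : R) : linear (lie x).
Proof. by move=> c u v; rewrite lieDr /lie -scalerAr -scalerAl -scalerBr. Qed.

Section Span.
Variable A : algType CC.
Implicit Types (S T : A -> Prop) (x y : A).

Lemma span_mem S x : S x -> span S x.
Proof.
move=> Sx; exists [:: (1, x)]; rewrite big_seq1 scale1r; split=> // p.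
by rewrite inE => /eqP ->.
Qed.

Lemma span0 S : span S 0.
Proof. by exists [::]; rewrite big_nil. Qed.

Lemma spanD S x y : span S x -> span S y -> span S (x + y).
Proof.
move=> [s [Ss ->]] [t [St ->]]; exists (s ++ t); rewrite big_cat; split=> // p.
by rewrite mem_cat => /orP[/Ss|/St].
Qed.

Lemma spanZ S c x : span S x -> span S (c *: x).
Proof.
move=> [s [Ss ->]]; exists [seq (c * p.1, p.2) | p <- s]; split.
  by move=> _ /mapP[p ps ->]; exact: (Ss p ps).
by rewrite big_map scaler_sumr; apply: eq_bigr => p _; rewrite scalerA.
Qed.

Lemma spanB S x y : span S x -> span S y -> span S (x - y).
Proof. by move=> Sx Sy; rewrite -scaleN1r; apply: spanD Sx (spanZ _ Sy). Qed.

Lemma span_ind S (P : A -> Prop) :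
  P 0 -> (forall x y, P x -> P y -> P (x + y)) -> (forall c x, P x -> P (c *: x)) ->
  (forall x, S x -> P x) -> forall x, span S x -> P x.
Proof.
move=> P0 PD PZ PS _ [s [Ss ->]]; elim: s Ss => [|p s IHs] Ss; first by rewrite big_nil.
rewrite big_cons; apply: PD; first by apply: PZ; apply: PS; apply: Ss; rewrite inE eqxx.
by apply: IHs => q qs; apply: Ss; rewrite inE qs orbT.
Qed.

Definition subspace (P : A -> Prop) :=
  [/\ P 0, forall x y, P x -> P y -> P (x + y) & forall c x, P x -> P (c *: x)].

Lemma span_subspace S : subspace (span S).
Proof. by split; [exact: span0 | exact: spanD | exact: spanZ]. Qed.

Lemma span_linear S (P : A -> Prop) (f : A -> A) : subspace P -> linear f ->
  (forall x, S x -> P (f x)) -> forall x, span S x -> P (f x).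
Proof.
move=> [P0 PD PZ] lin_f fSP; have f0 : f 0 = 0.
  by apply/(@addrI _ (f 0)); rewrite addr0 -{1}(scale1r (f 0)) -lin_f scale1r addr0.
apply: span_ind => //.
- by rewrite f0.
- by move=> x y Px Py; rewrite -[x]scale1r lin_f scale1r; exact: PD.
- by move=> c x Px; rewrite -[c *: x]addr0 lin_f f0 addr0; exact: PZ.
Qed.

End Span.

Section LowerCentralSeries.
Variable A : algType CC.
Implicit Types (a b c l n u v w x y : A) (j k : nat).

Lemma mull_linear a : linear ( *%R a : A -> A).
Proof. by move=> c x y; rewrite /= mulrDr scalerAr. Qed.

Lemma mulr_linear a : linear (fun x : A => x * a).
Proof. by move=> c x y; rewrite mulrDl scalerAl. Qed.

Lemma Mk_subspace k : subspace (@Mk A k).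
Proof. exact: span_subspace. Qed.

Lemma Mk0 k : @Mk A k 0.
Proof. exact: span0. Qed.

Lemma MkD k x y : Mk k x -> Mk k y -> Mk k (x + y).
Proof. exact: spanD. Qed.

Lemma MkB k x y : Mk k x -> Mk k y -> Mk k (x - y).
Proof. exact: spanB. Qed.

Lemma MkZ k (c : CC) x : Mk k x -> Mk k (c *: x).
Proof. exact: spanZ. Qed.

Lemma Mk_mull k a x : Mk k x -> Mk k (a * x).
Proof.
move: x; apply: span_linear (Mk_subspace _) (mull_linear a) _ => _ [b [l [c [Ll ->]]]].
by apply: span_mem; exists (a * b), l, c; rewrite !mulrA.
Qed.

Lemma Mk_mulr k a x : Mk k x -> Mk k (x * a).
Proof.
move: x; apply: span_linear (Mk_subspace _) (mulr_linear a) _ => _ [b [l [c [Ll ->]]]].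
by apply: span_mem; exists b, l, (c * a); rewrite !mulrA.
Qed.

Lemma Mk_lie k a x : Mk k x -> Mk k (lie a x).
Proof. by move=> Mx; apply: MkB; [apply: Mk_mull | apply: Mk_mulr]. Qed.

Lemma lcs_Mk k l : lcs k l -> Mk k l.
Proof. by move=> Ll; apply: span_mem; exists 1, l, 1; rewrite mul1r mulr1. Qed.

Lemma lcsB k x y : lcs k x -> lcs k y -> lcs k (x - y).
Proof. by case: k => [|[|k]] //; exact: spanB. Qed.

Lemma lcs_lie k a l : (0 < k)%N -> lcs k l -> lcs k.+1 (lie a l).
Proof. by case: k => // k _ Ll; apply: span_mem; exists a, l. Qed.

Lemma lcs_lie_Mk j a l : lcs j.+1 l -> Mk j.+2 (lie a l).
Proof. by move=> Ll; apply/lcs_Mk/lcs_lie. Qed.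

Lemma lcs_lie_lie j u v l : lcs j.+1 l -> lcs j.+3 (lie (lie u v) l).
Proof.
by move=> Ll; rewrite jacobi; apply: lcsB; apply: lcs_lie => //; apply: lcs_lie.
Qed.

Lemma lie_lie_mul_lcs j y z w l : lcs j.+1 l -> Mk j.+2 (lie y (lie z w) * l).
Proof.
case: j l => [|j] l Ll.
  by apply: Mk_mulr; apply: Mk_lie; exact: lcs_lie_Mk.
set g := lie y (lie z w).
move: l Ll; apply: span_linear (Mk_subspace _) (mull_linear g) _ => _ [a [x [Lx ->]]] /=.
rewrite -/(lie a x).
have -> : g * lie a x = lie (lie y (lie z w * a)) x - lie (lie z w * lie y a) x - lie g x * a.
  by rewrite lie_mulr lieDl lie_mull addrK addrK.
apply: MkB; first apply: MkB.
- exact/lcs_Mk/lcs_lie_lie.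
- by rewrite lie_mull; apply: MkD; [apply: Mk_mull | apply: Mk_mulr]; exact/lcs_Mk/lcs_lie_lie.
- exact/Mk_mulr/lcs_Mk/lcs_lie_lie.
Qed.

Lemma lcs3_mul_lcs j c l : lcs 3 c -> lcs j.+1 l -> Mk j.+2 (c * l).
Proof.
move=> Lc Ll; move: c Lc.
apply: span_linear (Mk_subspace _) (mulr_linear l) _ => _ [y [m [Lm ->]]] /=.
rewrite -/(lie y m); move: m Lm.
have lin_f : linear (fun m => lie y m * l).
  by move=> c u v; rewrite lie_linear mulrDl scalerAl.
apply: span_linear (Mk_subspace _) lin_f _ => _ [z [w [_ ->]]] /=.
exact: lie_lie_mul_lcs.
Qed.

Lemma lcs_mul_lcs3 j c l : lcs 3 c -> lcs j.+1 l -> Mk j.+2 (l * c).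
Proof.
move=> Lc Ll; have -> : l * c = c * l - lie c l by rewrite [c * l]mulr_lie addrK.
by apply: MkB; [exact: lcs3_mul_lcs | exact: lcs_lie_Mk].
Qed.

Lemma lcs3_lie_lie a b w : lcs 3 (lie b (lie a w)).
Proof. by apply: lcs_lie => //; exact: lcs_lie. Qed.

Lemma Mk3_mul_lcs j a l : Mk 3 a -> lcs j.+1 l -> Mk j.+2 (a * l).
Proof.
move=> Ma Ll; move: a Ma.
apply: span_linear (Mk_subspace _) (mulr_linear l) _ => _ [x [c [y [Lc ->]]]] /=.
rewrite -!mulrA; apply: Mk_mull; rewrite [y * l]mulr_lie mulrDr mulrA.
by apply: MkD; [apply: Mk_mulr; exact: lcs3_mul_lcs | apply: Mk_mull; exact: lcs_lie_Mk].
Qed.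

Lemma lcs_mul_Mk3 j a l : Mk 3 a -> lcs j.+1 l -> Mk j.+2 (l * a).
Proof.
move=> Ma Ll; move: a Ma.
apply: span_linear (Mk_subspace _) (mull_linear l) _ => _ [x [c [y [Lc ->]]]] /=.
rewrite !mulrA; apply: Mk_mulr.
have -> : l * x = x * l - lie x l by rewrite [x * l]mulr_lie addrK.
rewrite mulrBl -mulrA.
by apply: MkB; [apply: Mk_mull; exact: lcs_mul_lcs3 | apply: Mk_mulr; exact: lcs_lie_Mk].
Qed.

Lemma Mk3_mul_Mk j a n : Mk 3 a -> Mk j.+1 n -> Mk j.+2 (a * n).
Proof.
move=> Ma; move: n.
apply: span_linear (Mk_subspace _) (mull_linear a) _ => _ [u [l [v [Ll ->]]]] /=.
by rewrite !mulrA; apply: Mk_mulr; apply: Mk3_mul_lcs Ll; exact: Mk_mulr.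
Qed.

Lemma Mk_mul_Mk3 j a n : Mk 3 a -> Mk j.+1 n -> Mk j.+2 (n * a).
Proof.
move=> Ma; move: n.
apply: span_linear (Mk_subspace _) (mulr_linear a) _ => _ [u [l [v [Ll ->]]]] /=.
by rewrite -!mulrA; apply: Mk_mull; apply: lcs_mul_Mk3 Ll; exact: Mk_mull.
Qed.

Lemma Mk_lie_lie j a b n : Mk j.+1 n -> Mk j.+2 (lie b (lie a n)).
Proof.
move: n; have lin_f : linear (fun n => lie b (lie a n)) by move=> c u v; rewrite !lie_linear.
apply: span_linear (Mk_subspace _) lin_f _ => _ [u [l [v [Ll ->]]]] /=.
rewrite [u * l]mulr_lie mulrDl -mulrA (lieDr a) (lieDr b); apply: MkD; last first.
  by do 2!apply: Mk_lie; apply: Mk_mulr; exact: lcs_lie_Mk.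
rewrite (lie_mulr a) (lieDr b) (lie_mulr b l); apply: MkD.
  by apply: Mk_lie; apply: Mk_mulr; exact: lcs_lie_Mk.
apply: MkD; first by apply: Mk_mulr; exact: lcs_lie_Mk.
by apply: lcs_mul_lcs3 Ll; exact: lcs3_lie_lie.
Qed.

End LowerCentralSeries.

Section JordanProduct.
Variable A : algType CC.
Implicit Types (a b c n m : A) (k : nat).

Lemma jprodDl a b n : jprod (a + b) n = jprod a n + jprod b n.
Proof. by rewrite /jprod mulrDl mulrDr -scalerDr addrACA. Qed.

Lemma jprodDr a n m : jprod a (n + m) = jprod a n + jprod a m.
Proof. by rewrite /jprod mulrDl mulrDr -scalerDr addrACA. Qed.

Lemma jprodBl a b n : jprod (a - b) n = jprod a n - jprod b n.
Proof. by rewrite /jprod mulrBl mulrBr -scalerBr opprD addrACA. Qed.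

Lemma jprodBr a n m : jprod a (n - m) = jprod a n - jprod a m.
Proof. by rewrite /jprod mulrBl mulrBr -scalerBr opprD addrACA. Qed.

Lemma jprod1 n : jprod 1 n = n.
Proof.
have two_neq0 : (2%:R : Rdefinitions.R[i]) != 0 by rewrite pnatr_eq0.
by rewrite /jprod mul1r mulr1 -mulr2n -[n *+ 2]scaler_nat scalerA mulVf ?scale1r.
Qed.

Lemma jprod_assoc_lie a b c :
  jprod (jprod a b) c - jprod a (jprod b c) = ((2%:R)^-1 * (2%:R)^-1) *: lie b (lie a c).
Proof.
rewrite /jprod -!scalerAl -!scalerAr -!scalerDr !scalerA -scalerBr; congr (_ *: _).
rewrite /lie !(mulrDl, mulrDr, mulrBl, mulrBr) !mulrA.
rewrite opprD addrACA [a * b * c + _]addrC addrKA [b * c * a + _]addrC addrKA.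
rewrite mulrN mulNr opprD opprK !mulrA [- (a * c * b) + _]addrC addrACA [RHS]addrACA.
by congr (_ + _); exact: addrC.
Qed.

Lemma Mk_jprodr k a n : Mk k n -> Mk k (jprod a n).
Proof. by move=> Mn; apply/MkZ/MkD; [apply: Mk_mull | apply: Mk_mulr]. Qed.

Lemma Mk_jprodl k a n : Mk k n -> Mk k (jprod n a).
Proof. by move=> Mn; apply/MkZ/MkD; [apply: Mk_mulr | apply: Mk_mull]. Qed.

Lemma Mk3_jprod_Mk j a n : Mk 3 a -> Mk j.+1 n -> Mk j.+2 (jprod a n).
Proof. by move=> Ma Mn; apply/MkZ/MkD; [apply: Mk3_mul_Mk | apply: Mk_mul_Mk3]. Qed.

End JordanProduct.

Theorem proposition2p6 (A : algType CC) (hA : fin_gen_alg A) :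
  (* (i) star is well defined on A_star = A / M_3(A) *)
  (forall a a' b : A, Mk 3 (a - a') ->
     Mk 3 (jprod a b - jprod a' b) /\ Mk 3 (jprod b a - jprod b a')) /\
  (* (ii) star is associative on A_star *)
  (forall a b c : A, Mk 3 (jprod (jprod a b) c - jprod a (jprod b c))) /\
  (* (iii) for every k >= 1, a star n is a well-defined action of A_star
     on N_k(A) = M_k(A) / M_{k+1}(A) making it an A_star-module *)
  (forall k : nat, (1 <= k)%N ->
     (* maps M_k to M_k *)
     (forall (a n : A), Mk k n -> Mk k (jprod a n)) /\
     (* independent of the representative of n in N_k *)
     (forall (a n : A), Mk k.+1 n -> Mk k.+1 (jprod a n)) /\
     (* independent of the representative of a in A_star *)
     (forall (a n : A), Mk 3 a -> Mk k n -> Mk k.+1 (jprod a n)) /\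
     (* module axioms (modulo M_{k+1}) *)
     (forall n : A, Mk k n -> Mk k.+1 (jprod 1 n - n)) /\
     (forall (a b n : A), Mk k n ->
        Mk k.+1 (jprod (a + b) n - (jprod a n + jprod b n))) /\
     (forall (a n m : A), Mk k n -> Mk k m ->
        Mk k.+1 (jprod a (n + m) - (jprod a n + jprod a m))) /\
     (forall (a b n : A), Mk k n ->
        Mk k.+1 (jprod (jprod a b) n - jprod a (jprod b n)))).
Proof.
split.
  by move=> a a' b Ma; rewrite -jprodBl -jprodBr; split; [apply: Mk_jprodl | apply: Mk_jprodr].
split.
  by move=> a b c; rewrite jprod_assoc_lie; apply/MkZ/lcs_Mk/lcs3_lie_lie.
case=> [//|j] _; do !split.
- by move=> a n; exact: Mk_jprodr.
- by move=> a n; exact: Mk_jprodr.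
- by move=> a n; exact: Mk3_jprod_Mk.
- by move=> n _; rewrite jprod1 subrr; exact: Mk0.
- by move=> a b n _; rewrite jprodDl subrr; exact: Mk0.
- by move=> a n m _ _; rewrite jprodDr subrr; exact: Mk0.
- by move=> a b n Mn; rewrite jprod_assoc_lie; apply: MkZ; exact: Mk_lie_lie.
Qed.
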